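(* Let $n \geq 1$ be an integer and consider Nim on the hypercube $Q_n$ in which every edge has weight $1$, with the playing piece $\Delta$ starting at a vertex. Then the first player $P_1$ has a winning strategy if and only if $n$ is odd.
   Context: Nim on a graph: two players agree on a finite simple undirected graph $G$ whose edges carry positive integer weights, and a starting vertex on which a playing piece $\Delta$ is placed. Players $P_1$ (who moves first) and $P_2$ alternate. On a turn, the player chooses an edge of positive weight incident with the vertex currently holding $\Delta$, lowers that edge's weight by a positive integer amount, and moves $\Delta$ to the other endpoint of that edge. Edges of weight $0$ are no longer playable. A player who cannot move loses. The hypercube $Q_n$ has as vertices the binary $n$-tuples, two being adjacent iff they differ in exactly one coordinate. *)

From mathcomp Require Import all_boot.
Set Implicit Arguments. Unset Strict Implicit. Unset Printing Implicit Defensive.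

(* Edge weights are a function on
   unordered pairs {u,v}, represented as the 2-element set [set u; v]. *)

Definition nim_pos (V : finType) := (({set V} -> nat) * V)%type.

Definition nim_move (V : finType) (adj : rel V) (s t : nim_pos V) : Prop :=
  adj s.2 t.2 /\
  exists k, 0 < k <= s.1 [set s.2; t.2] /\
    forall e, t.1 e = (if e == [set s.2; t.2] then s.1 e - k else s.1 e).

(* nim_win adj s : the player about to move from position s has a winning
   strategy (the game is finite since total weight strictly decreases; a
   player who cannot move loses). *)
Inductive nim_win (V : finType) (adj : rel V) : nim_pos V -> Prop :=
| NimWin (s t : nim_pos V) :
    nim_move adj s t ->
    (forall u, nim_move adj t u -> nim_win adj u) ->
    nim_win adj s.

Definition hcube_vertex (n : nat) := {ffun 'I_n -> bool}.

Definition hcube_adj (n : nat) : rel (hcube_vertex n) :=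
  fun u v => #|[set i : 'I_n | u i != v i]| == 1.

(* All edges have weight 1 (non-edges: weight 0, irrelevant to the game). *)
Definition hcube_unit_weights (n : nat) : {set hcube_vertex n} -> nat :=
  fun e => if [exists u, exists v, hcube_adj u v && (e == [set u; v])]
           then 1 else 0.

From mathcomp Require Import all_boot zify.
Set Implicit Arguments. Unset Strict Implicit. Unset Printing Implicit Defensive.

(* Both directions are pairing arguments.  Call a property P of positions
   responsive if every move from a P-position can be answered by a move back
   into P; since each move lowers the total weight, the player to move at a
   P-position then loses, and whoever answers always wins.
   For n even, P says: all weights are at most 1, the piece stands on a vertex
   of the starting colour (parity of the number of ones), and every vertex of
   the other colour has even degree in the graph of remaining edges.  Entering
   such a vertex leaves it with odd, hence positive, degree, and leaving it
   again restores evenness; initially every degree is n.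
   For n odd, P1 first erases the edge from v0 in the last direction.  Play
   then stays within distance 2 of v0 and P1 mirrors P2: a move from v0 + e_i
   to v0 + e_i + e_j is answered by the move to v0 + e_j, and a move from
   v0 + e_i back to v0 by the move along the direction paired with i, where
   the remaining n - 1 directions (an even number) are paired off. *)

Lemma set2C (T : finType) (a b : T) : [set a; b] = [set b; a].
Proof. exact: setUC. Qed.

Lemma eq_set2l (T : finType) (a b1 b2 : T) : ([set a; b1] == [set a; b2]) = (b1 == b2).
Proof.
apply/eqP/eqP => [E|-> //].
have /set2P [b1a|//] : b1 \in [set a; b2] by rewrite -E set22.
have : b2 \in [set a; b1] by rewrite E set22.
by rewrite b1a in_set2 orbb => /eqP.
Qed.

Lemma set2_neq (T : finType) (a b c d : T) : a \notin [set c; d] -> [set a; b] != [set c; d].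
Proof. by apply: contra => /eqP <-; rewrite set21. Qed.

Section NimGame.
Variables (V : finType) (adj : rel V).

Definition nim_total (s : nim_pos V) : nat := \sum_(e : {set V}) s.1 e.

Lemma nim_move_total s t : nim_move adj s t -> nim_total t < nim_total s.
Proof.
case=> _ [k [/andP [k_gt0 k_le] t1E]].
rewrite /nim_total (bigD1 [set s.2; t.2]) //= [X in _ < X](bigD1 [set s.2; t.2]) //=.
rewrite (eq_bigr (fun e => s.1 e)) => [|e /negbTE e_neq]; last by rewrite t1E e_neq.
by rewrite ltn_add2r t1E eqxx ltn_subrL k_gt0 (leq_trans k_gt0 k_le).
Qed.

Definition nim_responsive (P : nim_pos V -> Prop) :=
  forall s t, P s -> nim_move adj s t -> exists2 u, nim_move adj t u & P u.

Variable P : nim_pos V -> Prop.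
Hypothesis P_responsive : nim_responsive P.

Lemma responsive_nim_lose s : P s -> ~ nim_win adj s.
Proof.
move=> + win; elim: win => {}s t st _ IH Ps.
have [u tu Pu] := P_responsive Ps st.
exact: IH tu Pu.
Qed.

Lemma responsive_nim_win s t : P s -> nim_move adj s t -> nim_win adj t.
Proof.
move: {2}(nim_total s).+1 (ltnSn (nim_total s)) => k.
elim: k s t => [//|k IH] s t lt_sk Ps st.
have [u tu Pu] := P_responsive Ps st.
apply: (NimWin tu) => v uv; apply: (IH u) => //.
by have := nim_move_total st; have := nim_move_total tu; lia.
Qed.

End NimGame.

Section UnitWeights.
Variables (V : finType) (adj : rel V).
Implicit Types (w : {set V} -> nat) (e : {set V}).

Definition nim_erase w e : {set V} -> nat := fun f => if f == e then 0 else w f.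

Lemma nim_erase_neq w e A : A != e -> nim_erase w e A = w A.
Proof. by rewrite /nim_erase => /negbTE ->. Qed.

Lemma nim_erase_le1 w e : (forall f, w f <= 1) -> forall f, nim_erase w e f <= 1.
Proof. by move=> w_le1 f; rewrite /nim_erase; case: ifP. Qed.

Lemma nim_erase2_eq w w' e1 e2 A B : w' =1 nim_erase w e1 ->
  w A = w B -> (A \in [set e1; e2]) = (B \in [set e1; e2]) ->
  nim_erase w' e2 A = nim_erase w' e2 B.
Proof.
move=> w'E; rewrite /nim_erase !w'E /nim_erase !in_set2 => wAB.
by case: (A == e1); case: (A == e2); case: (B == e1); case: (B == e2).
Qed.

Lemma nim_move_erase w x y :
  adj x y -> w [set x; y] = 1 -> nim_move adj (w, x) (nim_erase w [set x; y], y).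
Proof.
move=> xy w_xy; split => //=; exists 1; rewrite w_xy; split => // f.
by rewrite /nim_erase; case: eqP => // ->; rewrite w_xy.
Qed.

Lemma nim_move_unitP s t : (forall e, s.1 e <= 1) -> nim_move adj s t ->
  [/\ adj s.2 t.2, s.1 [set s.2; t.2] = 1 & t.1 =1 nim_erase s.1 [set s.2; t.2]].
Proof.
move=> s_le1 [st [k [/andP [k_gt0 k_le] t1E]]].
have w_st : s.1 [set s.2; t.2] = 1.
  by apply/eqP; rewrite eqn_leq s_le1 (leq_trans k_gt0 k_le).
have k1 : k = 1 by apply/eqP; rewrite eqn_leq k_gt0 andbT -w_st.
split => // f; rewrite t1E /nim_erase; case: eqP => // ->.
by rewrite w_st k1.
Qed.

End UnitWeights.

Section EvenOpposite.
Variables (V : finType) (adj : rel V) (col : V -> bool).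
Implicit Types (w : {set V} -> nat).

Definition nim_nbhd w y := [set z | adj y z && (w [set y; z] != 0)].

Lemma eq_nim_nbhd w1 w2 y : w1 =1 w2 -> nim_nbhd w1 y = nim_nbhd w2 y.
Proof. by move=> w12; apply: eq_finset => z; rewrite w12. Qed.

Lemma nim_nbhd_erase w y z : nim_nbhd (nim_erase w [set y; z]) y = nim_nbhd w y :\ z.
Proof.
apply/setP => z'; rewrite !inE /nim_erase eq_set2l.
by case: (z' =P z) => //=; rewrite andbF.
Qed.

Lemma nim_nbhd_erase_notin w y (e : {set V}) :
  y \notin e -> nim_nbhd (nim_erase w e) y = nim_nbhd w y.
Proof.
move=> y_e; apply/setP => z; rewrite !inE /nim_erase.
by case: ([set y; z] =P e) => // yz_e; rewrite -yz_e set21 in y_e.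
Qed.

Hypothesis adj_sym : symmetric adj.
Hypothesis col_adj : forall u v, adj u v -> col v = ~~ col u.

Definition even_opposite (b : bool) (s : nim_pos V) :=
  [/\ forall e, s.1 e <= 1, col s.2 = b &
      forall y, col y != b -> ~~ odd #|nim_nbhd s.1 y|].

Lemma even_opposite_responsive b : nim_responsive adj (even_opposite b).
Proof.
case=> w x [w' y] [w_le1 /= x_b w_even] /(nim_move_unitP w_le1) [/= xy w_xy w'E].
have y_b : col y = ~~ b by rewrite (col_adj xy) x_b.
have nbhd_w'y : nim_nbhd w' y = nim_nbhd w y :\ x.
  by rewrite (eq_nim_nbhd _ w'E) set2C nim_nbhd_erase.
have x_nbhd : x \in nim_nbhd w y by rewrite inE adj_sym xy set2C w_xy.
have odd_y : odd #|nim_nbhd w' y|.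
  have /w_even : col y != b by rewrite y_b; case: (b).
  by rewrite (cardsD1 x) x_nbhd nbhd_w'y add1n /= negbK.
have [z] : exists z, z \in nim_nbhd w' y by apply/card_gt0P; case: #|_| odd_y.
rewrite inE => /andP [yz w'_yz].
have w'_le1 f : w' f <= 1 by rewrite w'E nim_erase_le1.
have w'_yz1 : w' [set y; z] = 1 by apply/eqP; rewrite eqn_leq w'_le1 lt0n w'_yz.
have z_b : col z = b by rewrite (col_adj yz) y_b negbK.
exists (nim_erase w' [set y; z], z); first exact: nim_move_erase.
split => //= [e|y' y'_b]; first exact: nim_erase_le1.
have [->|y'_y] := eqVneq y' y.
  by move: odd_y; rewrite nim_nbhd_erase (cardsD1 z) inE yz w'_yz.
have y'_z : y' != z by apply: contra_neq y'_b => ->.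
have y'_x : y' != x by apply: contra_neq y'_b => ->.
rewrite nim_nbhd_erase_notin; last by rewrite in_set2 negb_or y'_y.
rewrite (eq_nim_nbhd _ w'E) nim_nbhd_erase_notin; last by rewrite in_set2 negb_or y'_x.
exact: w_even.
Qed.

End EvenOpposite.

Section Hypercube.
Variable n : nat.
Implicit Types (u v : hcube_vertex n) (i j a b : 'I_n).

Definition flip v i : hcube_vertex n := [ffun k => if k == i then ~~ v k else v k].

Lemma flipE v i k : flip v i k = if k == i then ~~ v k else v k.
Proof. by rewrite ffunE. Qed.

Lemma flipK i : involutive (flip^~ i).
Proof. by move=> v; apply/ffunP => k; rewrite !flipE; case: (k == i); rewrite ?negbK. Qed.

Lemma flipC v a b : flip (flip v a) b = flip (flip v b) a.
Proof. by apply/ffunP => k; rewrite !flipE; case: (k == a); case: (k == b). Qed.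

Lemma flip_neq v i : flip v i != v.
Proof. by apply/eqP => /ffunP /(_ i); rewrite flipE eqxx; case: (v i). Qed.

Lemma flip_inj v : injective (flip v).
Proof.
move=> a b /ffunP /(_ a); rewrite !flipE eqxx.
by case: (a =P b) => // _; case: (v a).
Qed.

Lemma flip2_neq v a b : a != b -> flip (flip v a) b != v.
Proof.
move=> ab; apply/eqP => /ffunP /(_ a).
by rewrite !flipE eqxx (negbTE ab); case: (v a).
Qed.

Lemma flip2_neq_flip v a b c : a != b -> flip (flip v a) b != flip v c.
Proof.
move=> ab; have [->|ca] := eqVneq c a; first exact: flip_neq.
apply/eqP => /ffunP /(_ a); rewrite !flipE eqxx (negbTE ab) eq_sym (negbTE ca).
by case: (v a).
Qed.

Lemma flip2_eq v a b i j :
  a != b -> flip (flip v a) b = flip (flip v i) j -> (a == i) || (a == j).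
Proof.
move=> ab /ffunP /(_ a); rewrite !flipE eqxx (negbTE ab).
by case: (a == j); case: (a == i) => //=; case: (v a).
Qed.

Lemma hcube_adjP u v : reflect (exists i, v = flip u i) (hcube_adj u v).
Proof.
apply: (iffP cards1P) => [[i Ui]|[i ->]].
  exists i; apply/ffunP => k; move/setP: Ui => /(_ k); rewrite !inE flipE.
  by case: (k == i); case: (u k); case: (v k).
exists i; apply/setP => k; rewrite !inE flipE.
by case: (k == i); case: (u k).
Qed.

Lemma hcube_adj_flip v i : hcube_adj v (flip v i).
Proof. by apply/hcube_adjP; exists i. Qed.

Lemma hcube_adj_sym : symmetric (@hcube_adj n).
Proof.
move=> u v; rewrite /hcube_adj.
by under eq_finset => k do rewrite eq_sym.
Qed.

Definition hcube_parity v := odd #|[set i | v i]|.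

Lemma hcube_parity_flip v i : hcube_parity (flip v i) = ~~ hcube_parity v.
Proof.
rewrite /hcube_parity; case vi: (v i).
  have -> : [set k | flip v i k] = [set k | v k] :\ i.
    by apply/setP => k; rewrite !inE flipE; case: eqP => [->|]; rewrite ?vi.
  by rewrite [in RHS](cardsD1 i) inE vi add1n negbK.
have -> : [set k | flip v i k] = i |: [set k | v k].
  by apply/setP => k; rewrite !inE flipE; case: eqP => [->|]; rewrite ?vi.
by rewrite cardsU1 inE vi add1n.
Qed.

Lemma hcube_parity_adj u v : hcube_adj u v -> hcube_parity v = ~~ hcube_parity u.
Proof. by move=> /hcube_adjP [i ->]; exact: hcube_parity_flip. Qed.

Lemma hcube_unit_weights_le1 e : @hcube_unit_weights n e <= 1.
Proof. by rewrite /hcube_unit_weights; case: ifP. Qed.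

Lemma hcube_unit_weights_adj u v : hcube_adj u v -> hcube_unit_weights [set u; v] = 1.
Proof.
move=> uv; rewrite /hcube_unit_weights ifT //.
by apply/existsP; exists u; apply/existsP; exists v; rewrite uv eqxx.
Qed.

Lemma hcube_unit_nbhd v : nim_nbhd (@hcube_adj n) (@hcube_unit_weights n) v = flip v @: setT.
Proof.
apply/setP => u; rewrite inE; apply/andP/imsetP => [[/hcube_adjP [i ->] _]|[i _ ->]].
  by exists i.
by rewrite hcube_adj_flip hcube_unit_weights_adj ?hcube_adj_flip.
Qed.

Lemma hcube_even_lose v0 : ~~ odd n -> ~ nim_win (@hcube_adj n) (@hcube_unit_weights n, v0).
Proof.
move=> n_even.
have := @even_opposite_responsive _ _ _ hcube_adj_sym hcube_parity_adj (hcube_parity v0).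
move/responsive_nim_lose; apply.
split=> //= [|y _]; first exact: hcube_unit_weights_le1.
by rewrite hcube_unit_nbhd card_imset ?cardsT ?card_ord //; exact: flip_inj.
Qed.

End Hypercube.

Section Mirror.
Variables (n : nat) (v0 : hcube_vertex n.+1).
Hypothesis n_even : ~~ odd n.
Implicit Types (w : {set hcube_vertex n.+1} -> nat) (i j a b : 'I_n.+1).

Definition pair_dir i : 'I_n.+1 := inord (n.-1 - i).

Lemma pair_dirP i : i != ord_max ->
  [/\ pair_dir i != ord_max, pair_dir i != i & pair_dir (pair_dir i) = i].
Proof.
move=> i_max; have lt_in : (i : nat) < n.
  rewrite ltn_neqAle -ltnS ltn_ord andbT.
  by apply: contra i_max => /eqP i_n; apply/eqP/val_inj.
have n_half : n./2 + n./2 = n by rewrite addnn -[RHS]odd_double_half (negbTE n_even).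
have pair_dirE j : (pair_dir j : nat) = n.-1 - j by rewrite inordK //; lia.
split; [apply/eqP => /(congr1 val) | apply/eqP => /(congr1 val) | apply: val_inj];
  by rewrite /= ?pair_dirE; lia.
Qed.

Lemma pair_dir_eq i j : i != ord_max -> j != ord_max ->
  (pair_dir i == j) = (i == pair_dir j).
Proof.
move=> /pair_dirP [_ _ ppi] /pair_dirP [_ _ ppj].
by apply/eqP/eqP => [<-|->].
Qed.

Lemma outer_edge_neq a b c d : a != b -> [set flip (flip v0 a) b; d] != [set v0; flip v0 c].
Proof. by move=> ab; apply: set2_neq; rewrite in_set2 negb_or flip2_neq ?flip2_neq_flip. Qed.

Lemma center_edgeE c c' : ([set v0; flip v0 c] == [set v0; flip v0 c']) = (c == c').
Proof. by rewrite eq_set2l (inj_eq (@flip_inj _ _)). Qed.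

Lemma center_edge_neq a b c d : a != b -> [set v0; flip v0 c] != [set flip (flip v0 a) b; d].
Proof. by move=> ab; rewrite eq_sym outer_edge_neq. Qed.

Lemma outer_edge_mem a b i j : a != b -> i != j ->
  ([set flip (flip v0 a) b; flip v0 a]
     \in [set [set flip (flip v0 i) j; flip v0 i]; [set flip (flip v0 i) j; flip v0 j]])
  = (flip (flip v0 a) b == flip (flip v0 i) j).
Proof.
move=> ab ij; apply/idP/eqP => [|xab_xij].
  rewrite in_set2 => /orP [] /eqP E; have := set21 (flip (flip v0 a) b) (flip v0 a);
    by rewrite E in_set2 (negbTE (flip2_neq_flip _ _ ab)) ?orbF => /eqP.
rewrite xab_xij in_set2 !eq_set2l !(inj_eq (@flip_inj _ _)).
by have := flip2_eq ab xab_xij.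
Qed.

Definition mirror_pos (s : nim_pos (hcube_vertex n.+1)) :=
  [/\ forall e, s.1 e <= 1,
      exists i, s.2 = flip v0 i,
      forall a b, a != b ->
        s.1 [set flip (flip v0 a) b; flip v0 a] = s.1 [set flip (flip v0 a) b; flip v0 b],
      forall a, a != ord_max -> s.1 [set v0; flip v0 a] = s.1 [set v0; flip v0 (pair_dir a)]
    & s.1 [set v0; flip v0 ord_max] = 0].

Lemma mirror_respond_center w w' i :
  mirror_pos (w, flip v0 i) -> w [set v0; flip v0 i] = 1 ->
  w' =1 nim_erase w [set v0; flip v0 i] ->
  exists2 u, nim_move (@hcube_adj _) (w', v0) u & mirror_pos u.
Proof.
move=> [/= w_le1 _ w_out w_center w_max] w_i w'E.
have i_max : i != ord_max by apply/eqP => i_max; move: w_i; rewrite i_max w_max.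
have [p_max p_i pp] := pair_dirP i_max; set p := pair_dir i in p_max p_i pp *.
have w'_p : w' [set v0; flip v0 p] = 1.
  by rewrite w'E nim_erase_neq ?center_edgeE // -w_center.
exists (nim_erase w' [set v0; flip v0 p], flip v0 p).
  exact: nim_move_erase (hcube_adj_flip _ _) w'_p.
split=> /=.
- by apply: nim_erase_le1 => f; rewrite w'E nim_erase_le1.
- by exists p.
- move=> a b ab.
  by rewrite !nim_erase_neq ?outer_edge_neq // !w'E !nim_erase_neq ?outer_edge_neq // w_out.
- move=> a a_max; apply: nim_erase2_eq w'E (w_center a a_max) _.
  rewrite !in_set2 !eq_set2l !(inj_eq (@flip_inj _ _)).
  by rewrite (pair_dir_eq a_max i_max) (pair_dir_eq a_max p_max) pp orbC.
- have [max_i max_p] : ord_max != i /\ ord_max != p by rewrite !(eq_sym ord_max).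
  by rewrite !nim_erase_neq ?center_edgeE // w'E nim_erase_neq ?center_edgeE.
Qed.

Lemma mirror_respond_out w w' i j : i != j ->
  mirror_pos (w, flip v0 i) -> w [set flip (flip v0 i) j; flip v0 i] = 1 ->
  w' =1 nim_erase w [set flip (flip v0 i) j; flip v0 i] ->
  exists2 u, nim_move (@hcube_adj _) (w', flip (flip v0 i) j) u & mirror_pos u.
Proof.
move=> ij [/= w_le1 _ w_out w_center w_max] w_ij w'E.
set x := flip (flip v0 i) j in w_ij w'E *.
have w'_j : w' [set x; flip v0 j] = 1.
  by rewrite w'E nim_erase_neq ?eq_set2l ?(inj_eq (@flip_inj _ _)) 1?eq_sym // -w_out.
exists (nim_erase w' [set x; flip v0 j], flip v0 j).
  by apply: nim_move_erase w'_j; rewrite hcube_adj_sym /x flipC hcube_adj_flip.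
split=> /=.
- by apply: nim_erase_le1 => f; rewrite w'E nim_erase_le1.
- by exists j.
- move=> a b ab; apply: nim_erase2_eq w'E (w_out a b ab) _.
  rewrite [in RHS]flipC !outer_edge_mem // 1?eq_sym //.
  by rewrite eq_sym [flip (flip v0 b) a]flipC.
- move=> a a_max.
  by rewrite !nim_erase_neq ?center_edge_neq // !w'E !nim_erase_neq ?center_edge_neq // w_center.
- by rewrite !nim_erase_neq ?center_edge_neq // w'E nim_erase_neq ?center_edge_neq.
Qed.

Lemma mirror_responsive : nim_responsive (@hcube_adj _) mirror_pos.
Proof.
case=> w x [w' y] s_mirror st.
have [w_le1 /= [i x_i] _ _ _] := s_mirror; subst x.
have [/= /hcube_adjP [j ->] w_ij w'E] := nim_move_unitP w_le1 st.
have [eq_ij|ij] := eqVneq i j.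
  subst j; rewrite flipK in w_ij w'E *; apply: (mirror_respond_center s_mirror).
    by rewrite set2C.
  by move=> f; rewrite w'E set2C.
apply: (mirror_respond_out ij s_mirror); first by rewrite set2C.
by move=> f; rewrite w'E set2C.
Qed.

Lemma mirror_start :
  mirror_pos (nim_erase (@hcube_unit_weights _) [set v0; flip v0 ord_max], flip v0 ord_max).
Proof.
split=> /=.
- exact/nim_erase_le1/hcube_unit_weights_le1.
- by exists ord_max.
- move=> a b ab; rewrite !nim_erase_neq ?outer_edge_neq // !hcube_unit_weights_adj //.
    by rewrite hcube_adj_sym flipC hcube_adj_flip.
  by rewrite hcube_adj_sym hcube_adj_flip.
- move=> a a_max; have [p_max _ _] := pair_dirP a_max.
  by rewrite !nim_erase_neq ?center_edgeE // !hcube_unit_weights_adj ?hcube_adj_flip.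
- by rewrite /nim_erase eqxx.
Qed.

End Mirror.

Theorem mainTheorem4 (n : nat) (v0 : hcube_vertex n) :
  1 <= n ->
  (nim_win (@hcube_adj n) (@hcube_unit_weights n, v0) <-> odd n).
Proof.
move=> n_gt0; split=> [win|n_odd].
  by apply: contraT => /hcube_even_lose/(_ win).
case: n n_gt0 v0 n_odd => [//|n] _ v0 /= n_even.
have first_move := nim_move_erase (hcube_adj_flip v0 ord_max)
  (hcube_unit_weights_adj (hcube_adj_flip v0 ord_max)).
apply: (NimWin first_move) => t mv.
by apply: responsive_nim_win mv; [exact: mirror_responsive | exact: mirror_start].
Qed.
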